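(* Let $\lambda>0$, $\gamma>0$, let $\beta_1=\beta_1(\gamma)$ be the unique positive solution of $\frac{\sqrt\pi}{2}\gamma x(1+x)^{1/2}(3+x)=1$, and let $0\le\beta<\beta_1$. Let $\varphi$ be the unique solution, within the set $K$ of bounded analytic functions $h:[0,\lambda]\to\mathbb{R}$ with $0\le h\le 1$, of \begin{align*} &[(1+\beta y(\eta))y'(\eta)]'+2\eta y'(\eta)=0, \quad 0<\eta<\lambda,\\ &y'(0)+\beta y(0)y'(0)-\gamma y(0)=0,\\ &y(\lambda)=1. \end{align*} Then for all $0<\eta<\lambda$: $0\le\varphi(\eta)\le 1$, $\varphi'(\eta)>0$ and $\varphi''(\eta)<0$. *)

From Stdlib Require Import Reals Lra.
From Coquelicot Require Import Coquelicot.
Open Scope R_scope.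

Definition analytic_at (h : R -> R) (x0 : R) : Prop :=
  exists (a : nat -> R) (r : R), 0 < r /\
    forall x, Rabs (x - x0) < r -> is_pseries a (x - x0) (h x).

Definition in_K (lam : R) (h : R -> R) : Prop :=
  (forall x, 0 <= x <= lam -> analytic_at h x) /\
  (forall x, 0 <= x <= lam -> 0 <= h x <= 1).

Definition solves_P (lam beta gamma : R) (y : R -> R) : Prop :=
  (forall eta, 0 < eta < lam ->
     Derive (fun t => (1 + beta * y t) * Derive y t) eta
       + 2 * eta * Derive y eta = 0) /\
  Derive y 0 + beta * y 0 * Derive y 0 - gamma * y 0 = 0 /\
  y lam = 1.

Definition beta1_eq (gamma x : R) : Prop :=
  sqrt PI / 2 * gamma * x * sqrt (1 + x) * (3 + x) = 1.

From Stdlib Require Import Reals Lra Psatz.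
From Coquelicot Require Import Coquelicot.
Open Scope R_scope.

(** The flux [u = (1 + beta phi) phi'] satisfies [u' = -2 eta phi' = -2 eta u / (1 + beta phi)],
    a linear equation with coefficient bounded by [2 lam], so by Gronwall's inequality [u]
    vanishes identically or nowhere, and keeps the sign of [u 0 = gamma phi 0].  If [phi 0 = 0]
    then [u = 0], so [phi] is constant, contradicting [phi lam = 1]; hence [u > 0], i.e.
    [phi' > 0], and [(1 + beta phi) phi'' = -2 eta phi' - beta phi'^2 < 0].  Analyticity is only
    used for twice differentiability, and only [beta >= 0] is needed: the bound [beta < beta1]
    and the uniqueness hypothesis are not. *)

Lemma CV_radius_ge_of_ex_pseries (a : nat -> R) (z : R) :
  ex_pseries a z -> Rbar_le (Rabs z) (CV_radius a).
Proof.
  intros Hz.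
  apply (proj1 (CV_radius_bounded a)).
  apply ex_series_lim_0, is_lim_seq_abs in Hz; simpl in Hz.
  rewrite Rabs_R0 in Hz.
  apply is_lim_seq_Reals in Hz.
  destruct (cauchy_bound _ (CV_Cauchy _ (exist _ 0 Hz))) as [M HM].
  exists M; intros n; apply HM; exists n.
  unfold scal; simpl; unfold mult; simpl.
  rewrite (pow_n_pow z n : @pow_n (AbsRing.Ring R_AbsRing) z n = z ^ n).
  rewrite !Rabs_mult, RPow_abs, Rabs_Rabsolu; ring.
Qed.

Section PowerSeriesOnBall.

Variables (h : R -> R) (a : nat -> R) (x r : R).
Hypothesis h_pseries : forall y, Rabs (y - x) < r -> is_pseries a (y - x) (h y).

Lemma pseries_ball_lt_CV_radius y :
  Rabs (y - x) < r -> Rbar_lt (Rabs (y - x)) (CV_radius a).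
Proof.
  intros Hy.
  pose proof (Rabs_pos (y - x)) as Hy0.
  set (w := (Rabs (y - x) + r) / 2).
  assert (Hw : ex_pseries a w).
  { pose proof (h_pseries (x + w)) as Hxw.
    replace (x + w - x) with w in Hxw by ring.
    exists (h (x + w)); apply Hxw.
    rewrite Rabs_pos_eq; unfold w; lra. }
  apply CV_radius_ge_of_ex_pseries in Hw.
  rewrite Rabs_pos_eq in Hw by (unfold w; lra).
  apply Rbar_lt_le_trans with w; [simpl; unfold w; lra | exact Hw].
Qed.

Lemma pseries_ball_is_derive y :
  Rabs (y - x) < r -> is_derive h y (PSeries (PS_derive a) (y - x)).
Proof.
  intros Hy.
  apply is_derive_ext_loc with (fun z => PSeries a (z - x)).
  - assert (Hd : 0 < r - Rabs (y - x)) by lra.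
    exists (mkposreal _ Hd); intros z Hz; simpl in Hz.
    unfold ball in Hz; simpl in Hz; unfold AbsRing_ball, abs, minus, plus, opp in Hz;
      simpl in Hz.
    apply is_pseries_unique, h_pseries.
    replace (z - x) with ((z + - y) + (y - x)) by ring.
    pose proof (Rabs_triang (z + - y) (y - x)); lra.
  - replace (PSeries (PS_derive a) (y - x))
      with (scal 1 (PSeries (PS_derive a) (y - x)))
      by (unfold scal; simpl; unfold mult; simpl; ring).
    apply (is_derive_comp (PSeries a) (fun z => z - x)).
    + exact (is_derive_PSeries a (y - x) (pseries_ball_lt_CV_radius y Hy)).
    + auto_derive; auto; ring.
Qed.

Lemma pseries_ball_Derive y :
  Rabs (y - x) < r -> is_pseries (PS_derive a) (y - x) (Derive h y).
Proof.
  intros Hy.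
  rewrite (is_derive_unique _ _ _ (pseries_ball_is_derive y Hy)).
  apply PSeries_correct, ex_pseries_derive, pseries_ball_lt_CV_radius, Hy.
Qed.

End PowerSeriesOnBall.

Lemma analytic_at_ex_derive (h : R -> R) (x : R) : analytic_at h x -> ex_derive h x.
Proof.
  intros [a [r [Hr Ha]]].
  assert (Hx : Rabs (x - x) < r) by (rewrite Rminus_diag, Rabs_R0; exact Hr).
  eexists; exact (pseries_ball_is_derive h a x r Ha x Hx).
Qed.

Lemma analytic_at_Derive (h : R -> R) (x : R) :
  analytic_at h x -> analytic_at (Derive h) x.
Proof.
  intros [a [r [Hr Ha]]].
  exists (PS_derive a), r; split; [exact Hr|].
  exact (pseries_ball_Derive h a x r Ha).
Qed.

Lemma nondecreasing_of_derive_nonneg (f df : R -> R) (a b : R) :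
  a <= b ->
  (forall t, a <= t <= b -> continuity_pt f t) ->
  (forall t, a < t < b -> is_derive f t (df t)) ->
  (forall t, a <= t <= b -> 0 <= df t) ->
  f a <= f b.
Proof.
  intros Hab Hf Hdf Hpos.
  destruct (MVT_gen f a b df) as [c [Hc Hmvt]];
    rewrite ?Rmin_left, ?Rmax_right in * by lra; auto.
  pose proof (Hpos c Hc); nra.
Qed.

Lemma nonincreasing_of_derive_nonpos (f df : R -> R) (a b : R) :
  a <= b ->
  (forall t, a <= t <= b -> continuity_pt f t) ->
  (forall t, a < t < b -> is_derive f t (df t)) ->
  (forall t, a <= t <= b -> df t <= 0) ->
  f b <= f a.
Proof.
  intros Hab Hf Hdf Hneg.
  destruct (MVT_gen f a b df) as [c [Hc Hmvt]];
    rewrite ?Rmin_left, ?Rmax_right in * by lra; auto.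
  pose proof (Hneg c Hc); nra.
Qed.

Section Gronwall.

Variables (u du : R -> R) (K L : R).
Hypothesis u_cont : forall t, 0 <= t <= L -> continuity_pt u t.
Hypothesis u_derive : forall t, 0 < t < L -> is_derive u t (du t).
Hypothesis du_bound : forall t, 0 <= t <= L -> Rabs (du t) <= K * Rabs (u t).

Lemma is_derive_sqr_mul_exp (s t : R) : 0 < t < L ->
  is_derive (fun t => u t ^ 2 * exp (s * t)) t
    ((2 * (u t * du t) + s * u t ^ 2) * exp (s * t)).
Proof.
  intros Ht.
  replace ((2 * (u t * du t) + s * u t ^ 2) * exp (s * t))
    with (plus (mult (INR 2 * du t * u t ^ 1) (exp (s * t)))
               (mult (u t ^ 2) (s * exp (s * t))))
    by (unfold plus, mult; simpl; ring).
  apply (is_derive_mult (fun t => u t ^ 2) (fun t => exp (s * t))).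
  - apply (is_derive_pow u 2), u_derive, Ht.
  - auto_derive; [exact I | ring].
  - intros; apply Rmult_comm.
Qed.

Lemma continuity_pt_sqr_mul_exp (s t : R) : 0 <= t <= L ->
  continuity_pt (fun t => u t ^ 2 * exp (s * t)) t.
Proof.
  intros Ht.
  apply continuity_pt_mult.
  - change (continuity_pt (fun t => u t * (u t * 1)) t).
    apply continuity_pt_mult; [|apply continuity_pt_mult; [|apply continuity_pt_const]];
      try apply u_cont; try exact Ht.
    intros ? ?; reflexivity.
  - apply continuity_pt_filterlim,
      (@ex_derive_continuous R_AbsRing R_NormedModule (fun t => exp (s * t))).
    auto_derive; exact I.
Qed.

Lemma Rabs_mul_derive_le t : 0 <= t <= L -> Rabs (u t * du t) <= K * u t ^ 2.
Proof.
  intros Ht.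
  pose proof (du_bound t Ht); pose proof (Rabs_pos (u t)).
  rewrite Rabs_mult, <- (Rabs_pos_eq (u t ^ 2)), <- RPow_abs by apply pow2_ge_0.
  nra.
Qed.

Lemma gronwall_sqr_lower t : 0 <= t <= L -> u 0 ^ 2 <= u t ^ 2 * exp (2 * K * t).
Proof.
  intros Ht.
  replace (u 0 ^ 2) with (u 0 ^ 2 * exp (2 * K * 0)) by (rewrite Rmult_0_r, exp_0; ring).
  apply (nondecreasing_of_derive_nonneg (fun t => u t ^ 2 * exp (2 * K * t))
           (fun t => (2 * (u t * du t) + 2 * K * u t ^ 2) * exp (2 * K * t))); try lra.
  - intros; apply continuity_pt_sqr_mul_exp; lra.
  - intros; apply is_derive_sqr_mul_exp; lra.
  - intros x Hx.
    pose proof (Rabs_mul_derive_le x ltac:(lra)); pose proof (Rle_abs (- (u x * du x))).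
    rewrite Rabs_Ropp in *.
    pose proof (exp_pos (2 * K * x)); nra.
Qed.

Lemma gronwall_sqr_upper t : 0 <= t <= L -> u t ^ 2 * exp (- 2 * K * t) <= u 0 ^ 2.
Proof.
  intros Ht.
  replace (u 0 ^ 2) with (u 0 ^ 2 * exp (- 2 * K * 0)) by (rewrite Rmult_0_r, exp_0; ring).
  apply (nonincreasing_of_derive_nonpos (fun t => u t ^ 2 * exp (- 2 * K * t))
           (fun t => (2 * (u t * du t) + - 2 * K * u t ^ 2) * exp (- 2 * K * t))); try lra.
  - intros; apply continuity_pt_sqr_mul_exp; lra.
  - intros; apply is_derive_sqr_mul_exp; lra.
  - intros x Hx.
    pose proof (Rabs_mul_derive_le x ltac:(lra)); pose proof (Rle_abs (u x * du x)).
    pose proof (exp_pos (- 2 * K * x)); nra.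
Qed.

Lemma gronwall_eq0 t : 0 <= t <= L -> u 0 = 0 -> u t = 0.
Proof.
  intros Ht H0.
  pose proof (gronwall_sqr_upper t Ht) as Hup; rewrite H0 in Hup.
  pose proof (exp_pos (- 2 * K * t)); pose proof (pow2_ge_0 (u t)).
  apply Rsqr_0_uniq; rewrite Rsqr_pow2; nra.
Qed.

Lemma gronwall_neq0 t : 0 <= t <= L -> u 0 <> 0 -> u t <> 0.
Proof.
  intros Ht H0 Hut.
  pose proof (gronwall_sqr_lower t Ht) as Hlow; rewrite Hut in Hlow.
  apply H0; nra.
Qed.

Lemma gronwall_pos t : 0 <= t <= L -> 0 < u 0 -> 0 < u t.
Proof.
  intros Ht H0.
  destruct (Rlt_or_le 0 (u t)) as [|Hle]; [assumption | exfalso].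
  destruct (Req_dec t 0) as [->|Ht0]; [lra|].
  destruct (Ranalysis5.IVT_interv (fun s => - u s) 0 t) as [z [Hz Huz]]; try lra.
  - intros s Hs; apply continuity_pt_opp, u_cont; lra.
  - destruct (Rle_lt_or_eq_dec _ _ Hle) as [|Heq]; [lra|].
    exfalso; apply (gronwall_neq0 t Ht); lra.
  - apply (gronwall_neq0 z); lra.
Qed.

End Gronwall.

Section ShapeOfSolution.

Variables (lam beta gamma : R) (phi : R -> R).
Hypothesis lam_pos : 0 < lam.
Hypothesis gamma_pos : 0 < gamma.
Hypothesis beta_ge0 : 0 <= beta.
Hypothesis phi_K : in_K lam phi.
Hypothesis phi_P : solves_P lam beta gamma phi.

Let flux (t : R) : R := (1 + beta * phi t) * Derive phi t.

Lemma phi_ex_derive t : 0 <= t <= lam -> ex_derive phi t.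
Proof. intros Ht; apply analytic_at_ex_derive, (proj1 phi_K), Ht. Qed.

Lemma Derive_phi_ex_derive t : 0 <= t <= lam -> ex_derive (Derive phi) t.
Proof. intros Ht; apply analytic_at_ex_derive, analytic_at_Derive, (proj1 phi_K), Ht. Qed.

Lemma phi_continuous t : 0 <= t <= lam -> continuity_pt phi t.
Proof.
  intros Ht; apply continuity_pt_filterlim, (@ex_derive_continuous R_AbsRing R_NormedModule).
  exact (phi_ex_derive t Ht).
Qed.

Lemma diffusivity_ge1 t : 0 <= t <= lam -> 1 <= 1 + beta * phi t.
Proof. intros Ht; pose proof (proj2 phi_K t Ht); nra. Qed.

Lemma is_derive_flux_alt t : 0 <= t <= lam ->
  is_derive flux t (beta * Derive phi t * Derive phi t
                    + (1 + beta * phi t) * Derive (Derive phi) t).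
Proof.
  intros Ht.
  replace (beta * Derive phi t * Derive phi t + (1 + beta * phi t) * Derive (Derive phi) t)
    with (plus (mult (beta * Derive phi t) (Derive phi t))
               (mult (1 + beta * phi t) (Derive (Derive phi) t)))
    by (unfold plus, mult; simpl; ring).
  apply (is_derive_mult (fun t => 1 + beta * phi t) (Derive phi)).
  - auto_derive; [apply phi_ex_derive, Ht | rewrite Rmult_1_l; reflexivity].
  - apply Derive_correct, Derive_phi_ex_derive, Ht.
  - intros; apply Rmult_comm.
Qed.

Lemma flux_continuous t : 0 <= t <= lam -> continuity_pt flux t.
Proof.
  intros Ht; apply continuity_pt_filterlim, (@ex_derive_continuous R_AbsRing R_NormedModule).
  eexists; exact (is_derive_flux_alt t Ht).
Qed.

Lemma is_derive_flux t : 0 < t < lam -> is_derive flux t (- 2 * t * Derive phi t).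
Proof.
  intros Ht.
  replace (- 2 * t * Derive phi t) with (Derive flux t).
  - eapply Derive_correct; eexists; apply is_derive_flux_alt; lra.
  - pose proof (proj1 phi_P t Ht); unfold flux; lra.
Qed.

Lemma flux_derive_bound t : 0 <= t <= lam ->
  Rabs (- 2 * t * Derive phi t) <= 2 * lam * Rabs (flux t).
Proof.
  intros Ht.
  pose proof (diffusivity_ge1 t Ht); pose proof (Rabs_pos (Derive phi t)).
  unfold flux; rewrite !Rabs_mult, Rabs_left, (Rabs_pos_eq t), (Rabs_pos_eq (1 + _)) by lra.
  assert (0 <= lam * Rabs (Derive phi t)) by nra.
  nra.
Qed.

Lemma flux_0 : flux 0 = gamma * phi 0.
Proof. destruct phi_P as [_ [Hbc _]]; unfold flux; lra. Qed.

Lemma phi_0_pos : 0 < phi 0.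
Proof.
  destruct (proj2 phi_K 0 ltac:(lra)) as [Hphi0 _].
  destruct (Rle_lt_or_eq_dec _ _ Hphi0) as [|Hzero]; [assumption | exfalso].
  assert (Dphi0 : forall t, 0 <= t <= lam -> Derive phi t = 0).
  { intros t Ht.
    assert (Hflux : flux t = 0).
    { apply (gronwall_eq0 flux (fun t => - 2 * t * Derive phi t) (2 * lam) lam);
        auto using flux_continuous, is_derive_flux, flux_derive_bound.
      rewrite flux_0, <- Hzero; ring. }
    pose proof (diffusivity_ge1 t Ht); unfold flux in Hflux.
    destruct (Rmult_integral _ _ Hflux); lra. }
  assert (Hconst : phi lam <= phi 0).
  { apply (nonincreasing_of_derive_nonpos phi (Derive phi)); try lra.
    - exact phi_continuous.
    - intros t Ht; apply Derive_correct, phi_ex_derive; lra.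
    - intros t Ht; rewrite Dphi0; lra. }
  destruct phi_P as [_ [_ Hend]]; lra.
Qed.

Lemma flux_pos t : 0 <= t <= lam -> 0 < flux t.
Proof.
  intros Ht.
  apply (gronwall_pos flux (fun t => - 2 * t * Derive phi t) (2 * lam) lam);
    auto using flux_continuous, is_derive_flux, flux_derive_bound.
  rewrite flux_0; pose proof phi_0_pos; nra.
Qed.

Lemma Derive_phi_pos t : 0 <= t <= lam -> 0 < Derive phi t.
Proof.
  intros Ht.
  pose proof (flux_pos t Ht); pose proof (diffusivity_ge1 t Ht); unfold flux in *.
  nra.
Qed.

Lemma Derive2_phi_neg t : 0 < t < lam -> Derive_n phi 2 t < 0.
Proof.
  intros Ht.
  change (Derive_n phi 2 t) with (Derive (Derive phi) t).
  pose proof (is_derive_unique _ _ _ (is_derive_flux_alt t ltac:(lra))) as Halt.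
  rewrite (is_derive_unique _ _ _ (is_derive_flux t Ht)) in Halt.
  pose proof (Derive_phi_pos t ltac:(lra)); pose proof (diffusivity_ge1 t ltac:(lra)).
  assert (0 <= beta * Derive phi t * Derive phi t) by (apply Rmult_le_pos; nra).
  nra.
Qed.

End ShapeOfSolution.

Theorem mainTheorem8 (lam gamma beta beta1 : R) (phi : R -> R)
  (Hlam : 0 < lam) (Hgamma : 0 < gamma)
  (Hb1pos : 0 < beta1) (Hb1 : beta1_eq gamma beta1)
  (Hb1uniq : forall x, 0 < x -> beta1_eq gamma x -> x = beta1)
  (Hbeta : 0 <= beta < beta1)
  (HK : in_K lam phi) (Hsol : solves_P lam beta gamma phi)
  (Huniq : forall h, in_K lam h -> solves_P lam beta gamma h ->
             forall x, 0 <= x <= lam -> h x = phi x) :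
  forall eta, 0 < eta < lam ->
    0 <= phi eta <= 1 /\ Derive phi eta > 0 /\ Derive_n phi 2 eta < 0.
Proof.
  intros eta Heta.
  split; [apply (proj2 HK); lra|].
  split.
  - apply (Derive_phi_pos lam beta gamma); auto; lra.
  - apply (Derive2_phi_neg lam beta gamma); auto; lra.
Qed.
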